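(* Let $f\in\mathbb{K}[[\underline{x}]][y]$ be a monic polynomial of degree $n$ which is prepared. Then $F(X_1,\dots,X_e,y)=f(X_1,X_2X_1,\dots,X_eX_1,y)\in\mathbb{K}[[\underline{X}]][y]$ is a quasi-ordinary polynomial.
   Context: $\mathbb{K}$ is an algebraically closed field of characteristic $0$, $\underline{x}=(x_1,\dots,x_e)$, $\underline{X}=(X_1,\dots,X_e)$. Write the $y$-discriminant of $f$ as $\Delta(\underline{x})=\sum_{d\ge0}u_d(\underline{x})$ with $u_d$ homogeneous of degree $d$, and let $a=\min\{d: u_d\neq0\}$. $f$ is called prepared if the coefficient $c_a$ of $x_1^a$ in $u_a$ is nonzero. A monic polynomial in $\mathbb{K}[[\underline{X}]][y]$ is quasi-ordinary if its $y$-discriminant is of the form $\underline{X}^{\alpha}\varepsilon(\underline{X})$ with $\alpha\in\mathbb{N}^e$ and $\varepsilon$ a unit of $\mathbb{K}[[\underline{X}]]$. *)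

From HB Require Import structures.
From mathcomp Require Import all_boot all_algebra.
From mathcomp Require Import boolp.
From mathcomp Require Import mpoly.

Set Implicit Arguments.
Unset Strict Implicit.
Unset Printing Implicit Defensive.

Import GRing.Theory.
Local Open Scope ring_scope.

(* The ring R[[x_1,...,x_e]] of formal power series in e variables.   *)
Section PowerSeries.
Variables (R : comNzRingType) (e : nat).

Record mps := MPS { mpscoef : 'X_{1..e} -> R }.

HB.instance Definition _ := gen_eqMixin mps.
HB.instance Definition _ := gen_choiceMixin mps.

Lemma mps_ext (f g : mps) : mpscoef f =1 mpscoef g -> f = g.
Proof. by case: f g => f [g] /= H; congr MPS; apply: funext. Qed.

Definition mps0 := MPS (fun _ => 0).
Definition mpsD f g := MPS (fun m => mpscoef f m + mpscoef g m).
Definition mpsN f := MPS (fun m => - mpscoef f m).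

Lemma mpsDA : associative mpsD.
Proof. by move=> f g h; apply: mps_ext => m /=; rewrite addrA. Qed.
Lemma mpsDC : commutative mpsD.
Proof. by move=> f g; apply: mps_ext => m /=; rewrite addrC. Qed.
Lemma mps0D : left_id mps0 mpsD.
Proof. by move=> f; apply: mps_ext => m /=; rewrite add0r. Qed.
Lemma mpsND : left_inverse mps0 mpsN mpsD.
Proof. by move=> f; apply: mps_ext => m /=; rewrite addNr. Qed.

HB.instance Definition _ := GRing.isZmodule.Build mps mpsDA mpsDC mps0D mpsND.

Definition mps_trunc (D : nat) (f : mps) : {mpoly R[e]} :=
  \sum_(k : 'X_{1..e < D}) mpscoef f k *: 'X_[k].

Lemma mcoeff_trunc D f m :
  (mps_trunc D f)@_m = if (mdeg m < D)%N then mpscoef f m else 0.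
Proof.
rewrite /mps_trunc raddf_sum /=.
under eq_bigr => k _ do rewrite mcoeffZ mcoeffX.
case: ifP => Hm.
  rewrite (bigD1 (BMultinom Hm)) //= eqxx mulr1 big1 ?addr0 // => k Hk.
  case: eqP => [Ekm|]; last by rewrite mulr0.
  by case/eqP: Hk; apply: val_inj.
rewrite big1 // => k _; case: eqP => [Ekm|]; last by rewrite mulr0.
by move: (bmdeg k); rewrite Ekm Hm.
Qed.

Lemma mcoeffM_low (p p' q q' : {mpoly R[e]}) m :
  (forall k, (mdeg k <= mdeg m)%N -> p@_k = p'@_k) ->
  (forall k, (mdeg k <= mdeg m)%N -> q@_k = q'@_k) ->
  (p * q)@_m = (p' * q')@_m.
Proof.
move=> Hp Hq; rewrite !mcoeffM; apply: eq_bigr => k /eqP Hk.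
have Hd : mdeg m = (mdeg k.1 + mdeg k.2)%N by rewrite {1}Hk mdegD.
rewrite Hp ?Hq //; apply: (leq_trans _ (eq_leq (esym Hd)));
  [exact: leq_addl | exact: leq_addr].
Qed.

Definition mpsM f g :=
  MPS (fun m => (mps_trunc (mdeg m).+1 f * mps_trunc (mdeg m).+1 g)@_m).

Lemma mpsM_trunc f g D m : (mdeg m < D)%N ->
  mpscoef (mpsM f g) m = (mps_trunc D f * mps_trunc D g)@_m.
Proof.
move=> HD; apply: mcoeffM_low => k hk; rewrite !mcoeff_trunc ltnS hk;
  by rewrite (leq_ltn_trans hk HD).
Qed.

Lemma trunc_mpsM_low f g D k : (mdeg k < D)%N ->
  (mps_trunc D (mpsM f g))@_k = (mps_trunc D f * mps_trunc D g)@_k.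
Proof. by move=> hk; rewrite mcoeff_trunc hk (mpsM_trunc _ _ hk). Qed.

Definition mps1 := MPS (fun m => (m == 0%MM)%:R).

Lemma mpsMA : associative mpsM.
Proof.
move=> f g h; apply: mps_ext => m.
rewrite (mpsM_trunc _ _ (ltnSn (mdeg m))) [RHS](mpsM_trunc _ _ (ltnSn (mdeg m))).
set D := (mdeg m).+1.
transitivity ((mps_trunc D f * (mps_trunc D g * mps_trunc D h))@_m).
  apply: mcoeffM_low => // k hk.
  by rewrite trunc_mpsM_low // ltnS.
rewrite mulrA; apply: mcoeffM_low => // k hk.
by rewrite trunc_mpsM_low // ltnS.
Qed.

Lemma mpsMC : commutative mpsM.
Proof. by move=> f g; apply: mps_ext => m /=; rewrite mulrC. Qed.

Lemma mps1M : left_id mps1 mpsM.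
Proof.
move=> f; apply: mps_ext => m /=.
transitivity ((1 * mps_trunc (mdeg m).+1 f)@_m).
  apply: mcoeffM_low => // k hk; rewrite mcoeff_trunc mcoeff1 ltnS hk /=.
  done.
by rewrite mul1r mcoeff_trunc ltnSn.
Qed.

Lemma mpsMDl : left_distributive mpsM mpsD.
Proof.
move=> f g h; apply: mps_ext => m /=.
rewrite -mcoeffD -mulrDl; apply: mcoeffM_low => // k hk.
by rewrite mcoeffD !mcoeff_trunc /=; case: ifP; rewrite ?addr0.
Qed.

Lemma mps1_neq0 : mps1 != 0.
Proof.
apply/eqP => H; have := congr1 (fun f => mpscoef f 0%MM) H.
by rewrite /= eqxx => /eqP; rewrite oner_eq0.
Qed.

HB.instance Definition _ :=
  GRing.Zmodule_isComNzRing.Build mps mpsMA mpsMC mps1M mpsMDl mps1_neq0.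

Definition mpsX (i : 'I_e) : mps := MPS (fun m => (m == mnm1 i)%:R).
Definition mpsXm (a : 'X_{1..e}) : mps := \prod_(i < e) mpsX i ^+ a i.

Definition mps_unit (u : mps) : Prop := exists v : mps, u * v = 1.

Definition mps_hcomp (d : nat) (f : mps) : mps :=
  MPS (fun m => if mdeg m == d then mpscoef f m else 0).

End PowerSeries.

Definition ydisc (A : comNzRingType) (f : {poly A}) : A :=
  (-1) ^+ 'C((size f).-1, 2) * resultant f f^`().

Definition prepared (R : comNzRingType) (e : nat) (f : {poly mps R e.+1}) : Prop :=
  let Delta := ydisc f in
  exists a : nat,
    (forall d, (d < a)%N -> mps_hcomp d Delta = 0) /\
    mps_hcomp a Delta != 0 /\
    mpscoef (mps_hcomp a Delta) (mnm1 ord0 *+ a)%MM != 0.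

(* Substitution g(x_1,...,x_{e+1}) |-> g(X_1, X_2 X_1, ..., X_{e+1} X_1).
   The monomial x^m goes to X_1^(m_1+...+m_{e+1}) X_2^(m_2) ... X_{e+1}^(m_{e+1}),
   so the coefficient of X^b in the image is g_m with
   m = (b_1 - (b_2+...+b_{e+1}), b_2, ..., b_{e+1}) when b_1 >= b_2+...+b_{e+1},
   and 0 otherwise. *)
Definition mps_subst (R : comNzRingType) (e : nat) (g : mps R e.+1) : mps R e.+1 :=
  MPS (fun b : 'X_{1..e.+1} =>
    let s := (\sum_(i < e.+1 | i != ord0) b i)%N in
    if (s <= b ord0)%N then
      mpscoef g [multinom (if i == ord0 then (b ord0 - s)%N else b i) | i < e.+1]
    else 0).

Definition quasi_ordinary (R : comNzRingType) (e : nat) (F : {poly mps R e}) : Prop :=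
  F \is monic /\
  exists (alpha : 'X_{1..e}) (eps : mps R e),
    mps_unit eps /\ ydisc F = @mpsXm R e alpha * eps.

(* The substitution x_1 |-> X_1, x_i |-> X_i X_1 is an injective ring morphism
   sending x^m to X^(blowup m), whose X_1-exponent is the total degree |m|.  It
   therefore commutes with the discriminant, and maps a series of order a to one
   whose monomials all have X_1-exponent at least a, i.e. to X_1^a * eps.  The
   constant term of eps is the coefficient of x_1^a in the discriminant, which is
   nonzero because f is prepared, so eps is a unit. *)

From HB Require Import structures.
From mathcomp Require Import all_boot all_algebra.
From mathcomp Require Import mpoly.
Import GRing.Theory.
Local Open Scope ring_scope.
Set Implicit Arguments.
Unset Strict Implicit.

Section PowerSeries.
Variables (R : comNzRingType) (n : nat).
Implicit Types (f g : mps R n) (p q : {mpoly R[n]}) (a b m : 'X_{1..n}).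

Lemma mpscoefB f g m : mpscoef (f - g) m = mpscoef f m - mpscoef g m.
Proof. by []. Qed.

Lemma mpscoef_sum (I : Type) (r : seq I) (P : pred I) (F : I -> mps R n) m :
  mpscoef (\sum_(i <- r | P i) F i) m = \sum_(i <- r | P i) mpscoef (F i) m.
Proof. by apply: (big_morph (fun f => mpscoef f m)). Qed.

Lemma mpscoef1 m : mpscoef (1 : mps R n) m = (m == 0%MM)%:R.
Proof. by []. Qed.

Lemma mpscoefM f g m :
  mpscoef (f * g) m = (mps_trunc (mdeg m).+1 f * mps_trunc (mdeg m).+1 g)@_m.
Proof. by []. Qed.

Lemma mpscoefM_low f f' g g' m :
  (forall k, (mdeg k <= mdeg m)%N -> mpscoef f k = mpscoef f' k) ->
  (forall k, (mdeg k <= mdeg m)%N -> mpscoef g k = mpscoef g' k) ->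
  mpscoef (f * g) m = mpscoef (f' * g') m.
Proof.
move=> eq_f eq_g; rewrite !mpscoefM; apply: mcoeffM_low => k le_km;
  by rewrite !mcoeff_trunc ltnS le_km ?eq_f ?eq_g.
Qed.

Lemma mcoeffXM a q b :
  ('X_[a] * q)@_b = if (a <= b)%MM then q@_(b - a) else 0.
Proof.
case: ifP => [le_ab | le_abF]; first by rewrite mulrC -{1}(submK le_ab) addmC mcoeffMX.
rewrite mcoeffM big1 // => k /eqP b_eq; rewrite mcoeffX.
case: eqP => [a_eq | _]; last by rewrite mul0r.
suff : (a <= b)%MM by rewrite le_abF.
by rewrite b_eq -a_eq lem_addr.
Qed.

Definition mps_of_mpoly p : mps R n := MPS (fun m => p@_m).

Lemma mps_of_mpoly_is_additive : additive mps_of_mpoly.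
Proof. by move=> p q; apply: mps_ext => m; rewrite mpscoefB /= mcoeffB. Qed.

Lemma mps_of_mpoly_is_multiplicative : multiplicative mps_of_mpoly.
Proof.
split=> [p q|]; apply: mps_ext => m /=; last by rewrite mcoeff1.
by apply: mcoeffM_low => k le_km; rewrite mcoeff_trunc ltnS le_km.
Qed.

HB.instance Definition _ := GRing.isAdditive.Build {mpoly R[n]} (mps R n)
  mps_of_mpoly mps_of_mpoly_is_additive.
HB.instance Definition _ := GRing.isMultiplicative.Build {mpoly R[n]} (mps R n)
  mps_of_mpoly mps_of_mpoly_is_multiplicative.

Lemma mpscoef_mpolyM p g m D : (mdeg m < D)%N ->
  mpscoef (mps_of_mpoly p * g) m = (p * mps_trunc D g)@_m.
Proof.
move=> lt_mD; rewrite (mpsM_trunc _ _ lt_mD); apply: mcoeffM_low => k le_km //.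
by rewrite mcoeff_trunc (leq_ltn_trans le_km lt_mD).
Qed.

Lemma mpsXmE a : mpsXm R a = mps_of_mpoly 'X_[a].
Proof.
rewrite mpolyXE_id rmorph_prod; apply: eq_bigr => i _; rewrite rmorphXn.
by congr (_ ^+ _); apply: mps_ext => m /=; rewrite mcoeffX eq_sym.
Qed.

Definition mps_order_ge f k := forall m, (mdeg m < k)%N -> mpscoef f m = 0.

Lemma mps_order_geM f g i j :
  mps_order_ge f i -> mps_order_ge g j -> mps_order_ge (f * g) (i + j).
Proof.
move=> ord_f ord_g m lt_m; rewrite mpscoefM mcoeffM big1 // => k /eqP m_eq.
rewrite !mcoeff_trunc.
have [lt_k1 | le_k1] := ltnP (mdeg k.1) i; first by case: ifP; rewrite ?ord_f ?mul0r.
have lt_k2 : (mdeg k.2 < j)%N.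
  by rewrite -(ltn_add2l (mdeg k.1)) (leq_trans _ (leq_add le_k1 (leqnn j))) // -mdegD -m_eq.
by case: ifP => _; case: ifP => _; rewrite ?ord_g ?mulr0.
Qed.

Lemma mps_order_geX f k : mps_order_ge f 1 -> mps_order_ge (f ^+ k) k.
Proof.
move=> ord_f; elim: k => [|k IHk]; first by [].
by rewrite exprS -add1n; apply: mps_order_geM.
Qed.

Lemma mps_order_ge_hcomp f k :
  (forall d, (d < k)%N -> mps_hcomp d f = 0) -> mps_order_ge f k.
Proof.
move=> hcomp0 m lt_mk.
by have /(congr1 (fun h => mpscoef h m)) := hcomp0 _ lt_mk; rewrite /= eqxx.
Qed.

Definition mps_shift a f := MPS (fun b => mpscoef f (b + a)%MM).

Lemma mpscoef_shift a f b : mpscoef (mps_shift a f) b = mpscoef f (b + a)%MM.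
Proof. by []. Qed.

Lemma mpsXm_shift a f :
  (forall b, ~~ (a <= b)%MM -> mpscoef f b = 0) -> f = mpsXm R a * mps_shift a f.
Proof.
move=> coef0; apply: mps_ext => b.
rewrite mpsXmE (mpscoef_mpolyM _ _ (ltnSn _)) mcoeffXM.
case: ifP => [le_ab | /negbT /coef0 //].
by rewrite mcoeff_trunc ltnS mdegB /= submK.
Qed.

End PowerSeries.

Section PowerSeriesUnits.
Variables (R : comUnitRingType) (n : nat).
Implicit Types (u w : mps R n).

Lemma mps_unit_1B w : mps_order_ge w 1 -> mps_unit (1 - w).
Proof.
move=> ord_w; pose v := MPS (fun m => \sum_(j < (mdeg m).+1) mpscoef (w ^+ j) m).
exists v; apply: mps_ext => m; set N := (mdeg m).+1.
have v_low k : (mdeg k <= mdeg m)%N -> mpscoef v k = mpscoef (\sum_(j < N) w ^+ j) k.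
  move=> le_km; rewrite mpscoef_sum /=.
  rewrite (big_ord_widen N (fun j => mpscoef (w ^+ j) k) (le_km : (mdeg k).+1 <= N)%N) big_mkcond /=.
  apply: eq_bigr => j _; case: ifP => // /negbT; rewrite -leqNgt => lt_kj.
  by rewrite (mps_order_geX ord_w).
have geom : (1 - w) * \sum_(j < N) w ^+ j = 1 - w ^+ N.
  by rewrite -opprB mulNr -subrX1 opprB.
rewrite (mpscoefM_low (fun _ _ => erefl) v_low) geom mpscoefB.
by rewrite (mps_order_geX ord_w) ?subr0.
Qed.

Lemma mps_unit_coef0 u : mpscoef u 0%MM \is a GRing.unit -> mps_unit u.
Proof.
set c := mpscoef u 0%MM => c_unit.
set w := 1 - mps_of_mpoly c^-1%:MP * u.
have uE : u = mps_of_mpoly c%:MP * (1 - w).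
  by rewrite opprB addrC subrK mulrA -rmorphM -mpolyCM mulrV // rmorph1 mul1r.
have [v wv] : mps_unit (1 - w).
  apply: mps_unit_1B => m; rewrite ltnS leqn0 mdeg_eq0 => /eqP ->.
  rewrite mpscoefB mpscoef1 eqxx (mpscoef_mpolyM _ _ (ltnSn _)) mcoeffCM.
  by rewrite mcoeff_trunc mdeg0 mulVr // subrr.
exists (v * mps_of_mpoly c^-1%:MP).
by rewrite uE -mulrA (mulrA (1 - w)) wv mul1r -rmorphM -mpolyCM mulrV // rmorph1.
Qed.

End PowerSeriesUnits.

Section Blowup.
Variables (R : comNzRingType) (e : nat).
Local Notation n := e.+1.
Implicit Types (f g : mps R n) (p q : {mpoly R[n]}) (m b : 'X_{1..n}).

Definition mtail b := (\sum_(i < n | i != ord0) b i)%N.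

(* [mps_subst] sends x^m to X^(blowup m); [blowdown] inverts [blowup] on its
   image, the b with [mtail b <= b ord0] (elsewhere the subtraction truncates). *)
Definition blowup m := [multinom if i == ord0 then mdeg m else m i | i < n].
Definition blowdown b :=
  [multinom if i == ord0 then (b ord0 - mtail b)%N else b i | i < n].
Definition blowup_tuple : n.-tuple {mpoly R[n]} :=
  [tuple if i == ord0 then 'X_i else 'X_i * 'X_ord0 | i < n].

Lemma mdeg_mtail m : mdeg m = (m ord0 + mtail m)%N.
Proof. by rewrite mdegE (bigD1 ord0). Qed.

Lemma mtail_blowup m : mtail (blowup m) = mtail m.
Proof. by apply: eq_bigr => i /negbTE i_neq0; rewrite mnmE i_neq0. Qed.

Lemma mtail_blowdown b : mtail (blowdown b) = mtail b.
Proof. by apply: eq_bigr => i /negbTE i_neq0; rewrite mnmE i_neq0. Qed.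

Lemma blowup0 m : blowup m ord0 = mdeg m.
Proof. by rewrite mnmE eqxx. Qed.

Lemma blowdown0 b : blowdown b ord0 = (b ord0 - mtail b)%N.
Proof. by rewrite mnmE eqxx. Qed.

Lemma mtail_blowup_le m : (mtail (blowup m) <= blowup m ord0)%N.
Proof. by rewrite mtail_blowup blowup0 mdeg_mtail leq_addl. Qed.

Lemma mdeg_blowup_ge m : (mdeg m <= mdeg (blowup m))%N.
Proof. by rewrite [X in (_ <= X)%N]mdeg_mtail blowup0 leq_addr. Qed.

Lemma mdeg_blowdown b : (mtail b <= b ord0)%N -> mdeg (blowdown b) = b ord0.
Proof. by move=> le_tail; rewrite mdeg_mtail mtail_blowdown blowdown0 subnK. Qed.

Lemma blowupK : cancel blowup blowdown.
Proof.
move=> m; apply/mnmP => i; rewrite mnmE; case: eqP => [->|/eqP/negbTE i_neq0].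
  by rewrite mtail_blowup blowup0 mdeg_mtail addnK.
by rewrite mnmE i_neq0.
Qed.

Lemma blowdownK b : (mtail b <= b ord0)%N -> blowup (blowdown b) = b.
Proof.
move=> le_tail; apply/mnmP => i; rewrite mnmE; case: eqP => [->|/eqP/negbTE i_neq0].
  by rewrite mdeg_blowdown.
by rewrite mnmE i_neq0.
Qed.

Lemma comp_blowupX m : 'X_[m] \mPo blowup_tuple = 'X_[blowup m].
Proof.
pose u (i : 'I_n) : 'X_{1..n} := if i == ord0 then U_(i)%MM else (U_(i) + U_(ord0))%MM.
rewrite comp_mpolyX.
have -> : \prod_(i < n) tnth blowup_tuple i ^+ m i = \prod_(i < n) 'X_[(u i *+ m i)%MM].
  apply: eq_bigr => i _; rewrite -mpolyXn tnth_mktuple /u.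
  by case: eqP => _ //; rewrite mpolyXD.
rewrite -(big_morph _ (@mpolyXD _ _) (@mpolyX0 _ _)); congr mpolyX.
apply/mnmP => j; rewrite mnm_sumE mnmE.
under eq_bigr => i _ do rewrite mulmnE /u.
case: eqP => [->|/eqP j_neq0].
  rewrite mdegE; apply: eq_bigr => i _.
  case: eqP => [->|/eqP/negbTE i_neq0]; first by rewrite mnm1E eqxx mul1n.
  by rewrite mnmDE !mnm1E eqxx i_neq0 mul1n.
rewrite (bigD1 j) //= big1 ?addn0.
  by rewrite (negbTE j_neq0) mnmDE !mnm1E eqxx eq_sym (negbTE j_neq0) addn0 mul1n.
move=> i /negbTE i_neq_j; case: ifP => _; rewrite ?mnmDE !mnm1E i_neq_j ?mul0n //.
by rewrite eq_sym (negbTE j_neq0).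
Qed.

Lemma mcoeff_comp_blowup_low p q D b :
  (forall k, (mdeg k < D)%N -> p@_k = q@_k) -> (mdeg b < D)%N ->
  (p \mPo blowup_tuple)@_b = (q \mPo blowup_tuple)@_b.
Proof.
move=> eq_pq lt_bD; apply/eqP; rewrite -subr_eq0 -mcoeffB -raddfB /= comp_mpolyEX.
rewrite raddf_sum big1 //= => m _; rewrite comp_blowupX mcoeffZ mcoeffX.
case: eqP => [b_eq|]; last by rewrite mulr0.
rewrite mcoeffB eq_pq ?subrr ?mul0r //.
by apply: leq_ltn_trans lt_bD; rewrite -b_eq mdeg_blowup_ge.
Qed.

Lemma mpscoef_subst f b : mpscoef (mps_subst f) b =
  if (mtail b <= b ord0)%N then mpscoef f (blowdown b) else 0.
Proof. by []. Qed.

Lemma mpscoef_subst_blowup f m : mpscoef (mps_subst f) (blowup m) = mpscoef f m.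
Proof. by rewrite mpscoef_subst mtail_blowup_le blowupK. Qed.

Lemma mpscoef_subst_trunc f b D : (mdeg b < D)%N ->
  mpscoef (mps_subst f) b = (mps_trunc D f \mPo blowup_tuple)@_b.
Proof.
move=> lt_bD; rewrite mpscoef_subst /mps_trunc [X in X@__]raddf_sum /=.
under eq_bigr => k _ do rewrite comp_mpolyZ comp_blowupX.
rewrite raddf_sum /=.
under eq_bigr => k _ do rewrite mcoeffZ mcoeffX.
case: ifP => [le_tail | le_tailF].
  have lt_D : (mdeg (blowdown b) < D)%N.
    by rewrite mdeg_blowdown //; apply: leq_ltn_trans lt_bD; rewrite mdeg_mtail leq_addr.
  rewrite (bigD1 (BMultinom lt_D)) //= blowdownK // eqxx mulr1 big1 ?addr0 // => k k_neq.
  case: eqP => [k_eq|]; last by rewrite mulr0.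
  by case/eqP: k_neq; apply: val_inj => /=; rewrite -k_eq blowupK.
rewrite big1 // => k _; case: eqP => [k_eq|]; last by rewrite mulr0.
by move: (mtail_blowup_le k); rewrite k_eq le_tailF.
Qed.

Lemma mps_subst_is_additive : additive (@mps_subst R e).
Proof.
move=> f g; apply: mps_ext => b; rewrite mpscoefB !mpscoef_subst.
by case: ifP => _; rewrite ?subr0.
Qed.

Lemma mps_subst_is_multiplicative : multiplicative (@mps_subst R e).
Proof.
split=> [f g|]; apply: mps_ext => b; set D := (mdeg b).+1;
  rewrite (mpscoef_subst_trunc _ (ltnSn _)) -/D.
  rewrite mpscoefM (@mcoeff_comp_blowup_low _ (mps_trunc D f * mps_trunc D g) D) //;
    last by move=> k lt_kD; rewrite trunc_mpsM_low.
  rewrite rmorphM /=; apply: mcoeffM_low => k le_kb;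
    by rewrite mcoeff_trunc ltnS le_kb (mpscoef_subst_trunc _ (leq_ltn_trans le_kb (ltnSn _))).
rewrite (@mcoeff_comp_blowup_low _ 1 D) //; first by rewrite comp_mpoly1 mcoeff1.
by move=> k lt_kD; rewrite mcoeff_trunc lt_kD mcoeff1 mpscoef1.
Qed.

HB.instance Definition _ := GRing.isAdditive.Build (mps R n) (mps R n)
  (@mps_subst R e) mps_subst_is_additive.
HB.instance Definition _ := GRing.isMultiplicative.Build (mps R n) (mps R n)
  (@mps_subst R e) mps_subst_is_multiplicative.

Lemma mps_subst_inj : injective (@mps_subst R e).
Proof.
move=> f g /(congr1 (@mpscoef R n)) subst_eq; apply: mps_ext => m.
by rewrite -[LHS]mpscoef_subst_blowup subst_eq mpscoef_subst_blowup.
Qed.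

Lemma mps_subst_order_ge f a : mps_order_ge f a ->
  mps_subst f = mpsXm R (U_(ord0) *+ a) * mps_shift (U_(ord0) *+ a) (mps_subst f).
Proof.
move=> ord_f; apply: mpsXm_shift => b not_le; rewrite mpscoef_subst.
case: ifP => // le_tail; apply: ord_f; rewrite mdeg_blowdown // ltnNge.
apply: contra not_le => le_ab; apply/mnm_lepP => i.
by rewrite mulmnE mnm1E; case: eqP => [<-|_]; rewrite ?mul1n ?mul0n.
Qed.

Lemma blowup_mnm1X a : blowup (U_(ord0) *+ a) = (U_(ord0) *+ a)%MM.
Proof.
apply/mnmP => i; rewrite mnmE; case: eqP => [->|//].
by rewrite mdegMn mdeg1 mul1n mulmnE mnm1E eqxx mul1n.
Qed.

End Blowup.

Lemma map_resultant_size (aR rR : comNzRingType) (f : {rmorphism aR -> rR})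
    (p q : {poly aR}) :
  size (map_poly f p) = size p -> size (map_poly f q) = size q ->
  f (resultant p q) = resultant (map_poly f p) (map_poly f q).
Proof.
move=> size_fp size_fq; rewrite /resultant /Sylvester_mx size_fp size_fq.
rewrite -det_map_mx /= map_col_mx; congr (\det (col_mx _ _));
  by apply: map_lin1_mx => v; rewrite map_poly_rV rmorphM /= map_rVpoly.
Qed.

Lemma ydisc_map (aR rR : comNzRingType) (f : {rmorphism aR -> rR}) (p : {poly aR}) :
  injective f -> ydisc (map_poly f p) = f (ydisc p).
Proof.
move=> f_inj; have size_f q : size (map_poly f q) = size q.
  by apply: size_map_inj_poly; rewrite ?rmorph0.
rewrite /ydisc rmorphM rmorphXn rmorphN1 size_f deriv_map.
by rewrite map_resultant_size.
Qed.

Theorem mainTheorem15 (K : closedFieldType) (charK0 : [pchar K] =i pred0)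
    (e : nat) (f : {poly mps K e.+1}) :
  f \is monic -> prepared f ->
  quasi_ordinary (map_poly (@mps_subst K e) f).
Proof.
move=> monic_f [a [hcomp_low [_ coef_x1a]]].
set x1a := (U_(ord0) *+ a)%MM in coef_x1a *.
have coef_D : mpscoef (ydisc f) x1a != 0.
  by move: coef_x1a; rewrite /= mdegMn mdeg1 mul1n eqxx.
split; first exact: monic_map.
rewrite ydisc_map; last exact: mps_subst_inj.
exists x1a, (mps_shift x1a (mps_subst (ydisc f))); split.
  apply: mps_unit_coef0; rewrite unitfE mpscoef_shift add0m.
  by rewrite -[x1a in mpscoef _ x1a]blowup_mnm1X mpscoef_subst_blowup.
by apply: mps_subst_order_ge; apply: mps_order_ge_hcomp.
Qed.
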